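(* Let $\mathbb{F}$ be a field and $n,r$ integers with $0<r\le n$ and $r$ even, and assume $|\mathbb{F}|>\frac{r}{2}+1$. Let $J_K := \begin{bmatrix} K & 0 \\ 0 & 0 \end{bmatrix}$ and $M = \begin{bmatrix} A & B \\ -B^T & D \end{bmatrix}$ be elements of $A_n(\mathbb{F})$, with $A,K\in A_r(\mathbb{F})$, $B\in M_{r,n-r}(\mathbb{F})$, $D\in A_{n-r}(\mathbb{F})$, and assume that $K$ is invertible. If $J_K+tM$ has rank at most $r$ for all $t\in\mathbb{F}$, then $D=0$ and $B^TK^{-1}(AK^{-1})^kB=0$ for every integer $k\ge 0$.
   Context: $A_m(\mathbb{F})$ denotes the space of $m\times m$ alternating matrices, i.e. matrices $X\in M_m(\mathbb{F})$ with $Y^TXY=0$ for all $Y\in\mathbb{F}^m$. The field may have characteristic 2. *)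

From mathcomp Require Import all_boot all_order all_algebra.
Set Implicit Arguments. Unset Strict Implicit. Unset Printing Implicit Defensive.
Import GRing.Theory.
Local Open Scope ring_scope.

Definition alternating (F : fieldType) (m : nat) (X : 'M[F]_m) : Prop :=
  forall y : 'cV[F]_m, y^T *m X *m y = 0.

(* |F| > k, stated so as to cover infinite fields: F has at least k+1
   pairwise distinct elements. *)
Definition card_gt (F : fieldType) (k : nat) : Prop :=
  exists s : seq F, uniq s /\ size s = k.+1.

(* Fix indices i, j of the second block and restrict J_K + tM to the rows and
   columns 1..r, i, j: this is an (r+2) x (r+2) alternating pencil G(t) of rank
   at most r, hence singular for every t.  Over the field F(X) the determinant of
   the alternating matrix G(X) is a square, so det G(X) = e^2 for a polynomial e
   of degree at most r/2 + 1; e vanishes at the r/2 + 2 available points of F,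
   hence det G(X) = 0.  The Schur complement of the invertible corner K + XA in
   G(X) is then a singular alternating 2 x 2 matrix, i.e. zero, which reads
     det(K + XA) D_ij + X (B^T adj(K + XA) B)_ij = 0.
   At X = 0 this gives D = 0, and then B^T adj(K + XA) B = 0.  Since
   adj(K + XA) = det(K + XA) K^-1 - X adj(K + XA) A K^-1, peeling off the
   coefficients of this identity one power of X at a time yields
   B^T K^-1 (A K^-1)^k B = 0 for every k. *)

From mathcomp Require Import all_boot all_order all_algebra perm.
Set Implicit Arguments. Unset Strict Implicit. Unset Printing Implicit Defensive.
Import GRing.Theory.
Local Open Scope ring_scope.

Lemma mx11_tr (R : Type) (Z : 'M[R]_1) : Z^T = Z.
Proof. by apply/matrixP => a b; rewrite !ord1 mxE. Qed.

Lemma det_block_schur (R : comUnitRingType) p q (P : 'M[R]_p) (Q : 'M[R]_(p, q))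
    (S : 'M[R]_(q, p)) (T : 'M[R]_q) :
  P \in unitmx -> \det (block_mx P Q S T) = \det P * \det (T - S *m invmx P *m Q).
Proof.
move=> uP.
have -> : block_mx P Q S T =
    block_mx 1%:M 0 (S *m invmx P) 1%:M *m block_mx P Q 0 (T - S *m invmx P *m Q).
  rewrite mulmx_block !mul1mx !mul0mx !addr0 -mulmxA mulVmx // mulmx1.
  by rewrite addrC subrK.
by rewrite det_mulmx det_lblock det_ublock !det1 !mul1r.
Qed.

Section Alternating.
Variable F : fieldType.

Lemma quad_delta n (X : 'M[F]_n) i j :
  (delta_mx i 0 : 'cV_n)^T *m X *m delta_mx j 0 = (X i j)%:M.
Proof.
rewrite trmx_delta -rowE -colE.
by apply/matrixP => a b; rewrite !ord1 !mxE /= mulr1n.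
Qed.

Lemma alternatingP n (X : 'M[F]_n) :
  alternating X <-> (forall i, X i i = 0) /\ (forall i j, X j i = - X i j).
Proof.
split=> [altX | [X_diag X_skew] y].
  have X_diag i : X i i = 0.
    by have /matrixP/(_ 0 0) := altX (delta_mx i 0); rewrite quad_delta !mxE mulr1n.
  split=> // i j; apply/eqP; rewrite -addr_eq0.
  have := altX (delta_mx i 0 + delta_mx j 0).
  rewrite mulmxDr [_^T]linearD /= !mulmxDl !quad_delta !X_diag.
  by move=> /matrixP/(_ 0 0); rewrite !mxE /= !mulr1n add0r addr0 => ->.
(* Skew-symmetry alone would only give 2 y^T X y = 0, which is useless in
   characteristic 2; write X = U - U^T with U strictly upper triangular. *)
pose U := \matrix_(i, j) (if (i < j)%N then X i j else 0) : 'M[F]_n.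
have -> : X = U - U^T.
  apply/matrixP => i j; rewrite !mxE.
  case: (ltngtP i j) => [_|_|/val_inj->]; first by rewrite subr0.
    by rewrite sub0r (X_skew j i).
  by rewrite X_diag subrr.
by rewrite mulmxBr mulmxBl -[y^T *m U^T *m y]mx11_tr !trmx_mul !trmxK mulmxA subrr.
Qed.

Lemma alternating0 n : alternating (0 : 'M[F]_n).
Proof. by move=> y; rewrite mulmx0 mul0mx. Qed.

Lemma alternating_congr n p (X : 'M[F]_n) (W : 'M[F]_(n, p)) :
  alternating X -> alternating (W^T *m X *m W).
Proof. by move=> altX y; have := altX (W *m y); rewrite trmx_mul !mulmxA. Qed.

Lemma alternatingD n (X Y : 'M[F]_n) :
  alternating X -> alternating Y -> alternating (X + Y).
Proof. by move=> altX altY y; rewrite mulmxDr mulmxDl altX altY addr0. Qed.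

Lemma alternatingZ n a (X : 'M[F]_n) : alternating X -> alternating (a *: X).
Proof. by move=> altX y; rewrite -scalemxAr -scalemxAl altX scaler0. Qed.

Lemma alternating_block p q (A : 'M[F]_p) (B : 'M[F]_(p, q)) (D : 'M[F]_q) :
  alternating A -> alternating D -> alternating (block_mx A B (- B^T) D).
Proof.
move=> altA altD y; rewrite -[y]vsubmxK tr_col_mx mul_row_block mul_row_col.
rewrite !mulmxDl altA altD add0r addr0 mulmxN mulNmx.
by rewrite -[_ *m B^T *m _]mx11_tr !trmx_mul !trmxK mulmxA addNr.
Qed.

Lemma det_alternating2 (X : 'M[F]_2) : alternating X -> \det X = X 0 1 ^+ 2.
Proof.
move=> /alternatingP [X_diag X_skew].
rewrite (expand_det_row _ 0) !big_ord_recl big_ord0 /cofactor !det_mx11 !mxE.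
rewrite X_diag mul0r add0r addr0 /= expr1 mulN1r mulrN.
have -> : lift 0 (0 : 'I_1) = 1 :> 'I_2 by apply/val_inj.
have -> : lift 1 (0 : 'I_1) = 0 :> 'I_2 by apply/val_inj.
by rewrite (X_skew 0 1) mulrN opprK expr2.
Qed.

Lemma alternating_schur p q (X : 'M[F]_(p + q)) :
  alternating X -> ulsubmx X \in unitmx ->
  alternating (drsubmx X - dlsubmx X *m invmx (ulsubmx X) *m ursubmx X).
Proof.
move=> altX uP y.
have := altX (col_mx (- (invmx (ulsubmx X) *m ursubmx X *m y)) y).
rewrite -mulmxA -[in X in _ *m (X *m _)](submxK X) mul_block_col tr_col_mx mul_row_col.
rewrite mulmxN !mulmxA mulmxV // mul1mx addNr mulmx0 add0r => <-.
by rewrite -mulmxA mulmxBl mulmxN !mulmxA addrC.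
Qed.

Lemma alternating_ulsubmx p q (X : 'M[F]_(p + q)) :
  alternating X -> alternating (ulsubmx X).
Proof.
move=> altX y; have := altX (col_mx y 0).
rewrite -{1}[X]submxK tr_col_mx trmx0 mul_row_block mul_row_col.
by rewrite !mul0mx !mulmx0 !addr0.
Qed.

Lemma det_alternating_sqr n (X : 'M[F]_n) : alternating X -> exists s, \det X = s ^+ 2.
Proof.
elim/ltn_ind: n X => -[|[|k]] IH X altX; have /alternatingP [X_diag _] := altX.
- by exists 1; rewrite det_mx00 expr1n.
- by exists 0; rewrite det_mx11 X_diag expr0n.
have [row0X | nz_row0X] := eqVneq (row 0 X) 0.
  exists 0; rewrite expr0n; apply/eqP/det0P; exists (delta_mx 0 0).
    by apply/eqP => /matrixP/(_ 0 0) /eqP; rewrite !mxE /= oner_eq0.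
  by rewrite -rowE.
have [j X0j] : exists j, X 0 j != 0.
  apply/existsP; move: nz_row0X; apply: contraNT => /existsPn X0.
  by apply/eqP/rowP => j; rewrite !mxE; apply/eqP/negPn/X0.
have j_neq0 : j != 0 by apply: contraNneq X0j => ->; rewrite X_diag.
(* Conjugating by the transposition (1 j) moves the pivot X 0 j to position
   (0, 1), making the upper-left 2 x 2 block invertible. *)
pose W : 'M[F]_k.+2 := tperm_mx 1 j.
pose Y : 'M[F]_(2 + k) := W^T *m X *m W.
have altY : alternating Y := alternating_congr W altX.
have Y01 : Y 0 1 = X 0 j.
  by rewrite /Y tr_tperm_mx -xrowE -xcolE !mxE tpermL tpermD // eq_sym.
have detY : \det Y = \det X.
  by rewrite !det_mulmx det_tr det_perm mulrC mulrA -expr2 sqrr_sign mul1r.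
have altP := alternating_ulsubmx altY.
have detP : \det (ulsubmx Y) = X 0 j ^+ 2.
  have ul01 (Z : 'M[F]_(2 + k)) : ulsubmx Z 0 1 = Z 0 1.
    by rewrite !mxE; congr (Z _ _); apply/val_inj.
  by rewrite det_alternating2 // ul01 Y01.
have uP : ulsubmx Y \in unitmx by rewrite unitmxE detP unitfE expf_neq0.
have [s det_schur] := IH k (ltnW (ltnSn k)) _ (alternating_schur altY uP).
exists (X 0 j * s).
by rewrite -detY -[Y]submxK det_block_schur // detP det_schur exprMn.
Qed.

Lemma alternating_schur2 r (P : 'M[F]_r) (C : 'M[F]_(r, 2)) (Q : 'M[F]_(2, r))
    (E : 'M[F]_2) :
  alternating (block_mx P C Q E) -> P \in unitmx -> \det (block_mx P C Q E) = 0 ->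
  \det P * E 0 1 = (Q *m \adj P *m C) 0 1.
Proof.
move=> altX uP detX0.
have := alternating_schur altX; rewrite block_mxKul block_mxKur block_mxKdl block_mxKdr.
move=> /(_ uP) altS; move: detX0; rewrite det_block_schur // det_alternating2 //.
have detP0 : \det P != 0 by rewrite -unitfE -unitmxE.
move=> /eqP; rewrite mulf_eq0 (negPf detP0) expf_eq0 /= 2!mxE subr_eq0 => /eqP->.
by rewrite /invmx uP -scalemxAr -scalemxAl mxE mulrA mulfV // mul1r.
Qed.

End Alternating.

Lemma alternating_map (F L : fieldType) (f : {rmorphism F -> L}) n (X : 'M[F]_n) :
  alternating X -> alternating (map_mx f X).
Proof.
move=> /alternatingP [X_diag X_skew]; apply/alternatingP.
by split=> [i|i j]; rewrite !mxE ?X_diag ?rmorph0 // X_skew rmorphN.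
Qed.

Lemma frac_mul_den (R : idomainType) (x : {fraction R}) :
  exists n d : R, d != 0 /\ x * tofrac d = tofrac n.
Proof.
elim/quotW: x => -[[n d] /= d_neq0]; exists n, d; split => //.
rewrite /tofrac; unlock; rewrite -[_ * _]FracField.pi_mul.
apply/eqmodP; rewrite /= FracField.equivfE /FracField.mulf /=.
by rewrite !numer_Ratio ?denom_Ratio ?mulf_neq0 ?oner_neq0 //= !mulr1 mulrC.
Qed.

Section PolySquares.
Variable F : fieldType.

Lemma poly_sqr_of_tofrac_sqr (d : {poly F}) (s : {fraction {poly F}}) :
  tofrac d = s ^+ 2 -> exists e, d = e ^+ 2.
Proof.
have [p [q [q_neq0 spq]]] := frac_mul_den s.
move=> ds; have dpq : d * q ^+ 2 = p ^+ 2.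
  by apply/eqP; rewrite -tofrac_eq tofracM !tofracXn ds -exprMn spq.
pose g := gcdp p q; have g_neq0 : g != 0 by rewrite gcdp_eq0 negb_and q_neq0 orbT.
have Ep : p = p %/ g * g by rewrite divpK // dvdp_gcdl.
have Eq : q = q %/ g * g by rewrite divpK // dvdp_gcdr.
have cop : coprimep (p %/ g) (q %/ g) by rewrite coprimep_div_gcd // q_neq0 orbT.
(* With p' = p / g and q' = q / g coprime, q' divides p'^2 = d q'^2, so q' is
   a constant. *)
have dpq' : d * (q %/ g) ^+ 2 = (p %/ g) ^+ 2.
  apply: (mulIf (expf_neq0 2 g_neq0)).
  by rewrite -mulrA -!exprMn -Ep -Eq.
have : q %/ g %| 1.
  rewrite coprimep_sym in cop.
  rewrite -(Gauss_dvdpl _ (coprimep_expr 2 cop)).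
  by rewrite mul1r -dpq' dvdp_mull // expr2 dvdp_mulIl.
rewrite dvdp1 => /eqP/eq_leq/size1_polyC qg_const; set c := (q %/ g)`_0 in qg_const.
have c_neq0 : c != 0.
  by rewrite -polyC_eq0 -qg_const; apply: contraNneq q_neq0 => qg0; rewrite Eq qg0 mul0r.
exists ((c^-1)%:P * (p %/ g)).
rewrite exprMn -dpq' qg_const mulrCA -exprMn -polyCM mulVf //.
by rewrite polyC1 expr1n mulr1.
Qed.

Lemma poly_sqr_roots_eq0 (e : {poly F}) (s : seq F) :
  uniq s -> all (root (e ^+ 2)) s -> (size (e ^+ 2) <= (size s).*2)%N -> e = 0.
Proof.
move=> s_uniq s_roots; apply: contraTeq => e_neq0; rewrite -ltnNge.
have /max_poly_roots : all (root e) s.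
  by apply/allP => t /(allP s_roots); rewrite rootM orbb.
move=> /(_ e_neq0 s_uniq) lt_se.
rewrite (polySpred (expf_neq0 2 e_neq0)) size_exp ltnS muln2 leq_double.
by rewrite -ltnS -(polySpred e_neq0).
Qed.

End PolySquares.

Section Pencil.
Variable F : fieldType.

Definition pencil n1 n2 (X Y : 'M[F]_(n1, n2)) : 'M[{poly F}]_(n1, n2) :=
  map_mx polyC X + 'X *: map_mx polyC Y.

Lemma map_mx_polyC_eval t n1 n2 (X : 'M[F]_(n1, n2)) :
  map_mx (horner_eval t) (map_mx polyC X) = X.
Proof. by apply/matrixP => i j; rewrite !mxE horner_evalE hornerC. Qed.

Lemma pencil_eval t n1 n2 (X Y : 'M[F]_(n1, n2)) :
  map_mx (horner_eval t) (pencil X Y) = X + t *: Y.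
Proof.
by rewrite map_mxD map_mxZ !map_mx_polyC_eval /= horner_evalE hornerX.
Qed.

Lemma horner_det_pencil t n (X Y : 'M[F]_n) :
  (\det (pencil X Y)).[t] = \det (X + t *: Y).
Proof. by rewrite -horner_evalE -det_map_mx pencil_eval. Qed.

Lemma det_pencil_at0 n (K A : 'M[F]_n) : (\det (pencil K A)).[0] = \det K.
Proof. by rewrite horner_det_pencil scale0r addr0. Qed.

Lemma size_det_pencil n (X Y : 'M[F]_n) : (size (\det (pencil X Y)) <= n.+1)%N.
Proof.
have size_entry i j : (size (pencil X Y i j) <= 2)%N.
  rewrite !mxE; apply: leq_trans (size_polyD _ _) _.
  rewrite geq_max (leq_trans (size_polyC_leq1 _)) //= mulrC mul_polyC.
  by rewrite (leq_trans (size_scale_leq _ _)) // size_polyX.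
rewrite /determinant; apply: (big_ind (fun p : {poly F} => size p <= n.+1)%N).
- by rewrite size_poly0.
- by move=> p q sp sq; rewrite (leq_trans (size_polyD _ _)) // geq_max sp sq.
move=> s _; rewrite mulr_sign; case: ifP => _; rewrite ?size_polyN;
  apply: leq_trans (size_poly_prod_leq _ _) _;
  rewrite leq_subLR cardE size_enum_ord addnS ltnS addnn -muln2;
  rewrite (@leq_trans (\sum_(i < n) 2)) ?leq_sum //;
  by rewrite big_const_ord iter_addn_0 mulnC.
Qed.

Lemma pencil_block p q (X1 Y1 : 'M[F]_p) (X2 Y2 : 'M[F]_(p, q))
    (X3 Y3 : 'M[F]_(q, p)) (X4 Y4 : 'M[F]_q) :
  pencil (block_mx X1 X2 X3 X4) (block_mx Y1 Y2 Y3 Y4) =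
  block_mx (pencil X1 Y1) (pencil X2 Y2) (pencil X3 Y3) (pencil X4 Y4).
Proof. by rewrite /pencil !map_block_mx scale_block_mx add_block_mx. Qed.

Lemma pencil0 n1 n2 (Y : 'M[F]_(n1, n2)) : pencil 0 Y = 'X *: map_mx polyC Y.
Proof. by rewrite /pencil map_mx0 add0r. Qed.

Lemma alternating_tofrac_pencil n (X Y : 'M[F]_n) :
  alternating X -> alternating Y -> alternating (map_mx (@tofrac _) (pencil X Y)).
Proof.
move=> altX altY; rewrite map_mxD map_mxZ -!map_mx_comp.
by apply: alternatingD; [|apply: alternatingZ]; apply: alternating_map.
Qed.

Lemma det_alternating_pencil_eq0 n (X Y : 'M[F]_n) (s : seq F) :
  alternating X -> alternating Y -> uniq s -> (n < (size s).*2)%N ->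
  (forall t, t \in s -> \det (X + t *: Y) = 0) -> \det (pencil X Y) = 0.
Proof.
move=> altX altY s_uniq lt_n_s sing.
have [f det_sqr] := det_alternating_sqr (alternating_tofrac_pencil altX altY).
have [e det_e] := poly_sqr_of_tofrac_sqr (etrans (esym (det_map_mx _ _)) det_sqr).
rewrite det_e (poly_sqr_roots_eq0 (e := e) s_uniq) ?expr0n // -det_e.
  by apply/allP => t /sing; rewrite /root horner_det_pencil => ->.
exact: leq_trans (size_det_pencil X Y) lt_n_s.
Qed.

Lemma det_pencil_neq0 n (K A : 'M[F]_n) : K \in unitmx -> \det (pencil K A) != 0.
Proof.
move=> uK; apply: contraTneq uK => detP0.
by rewrite unitmxE unitfE -(det_pencil_at0 K A) detP0 horner0 eqxx.
Qed.

Lemma pencil_schur_entry r (K A : 'M[F]_r) (C : 'M[F]_(r, 2)) (E : 'M[F]_2)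
    (s : seq F) :
  alternating K -> alternating A -> alternating E -> K \in unitmx ->
  uniq s -> (r + 2 < (size s).*2)%N ->
  (forall t, t \in s -> \det (block_mx K 0 0 0 + t *: block_mx A C (- C^T) E) = 0) ->
  \det (pencil K A) * (E 0 1)%:P +
    'X * ((map_mx polyC C)^T *m \adj (pencil K A) *m map_mx polyC C) 0 1 = 0.
Proof.
move=> altK altA altE uK s_uniq s_size sing.
have := alternating_block (0 : 'M[F]_(r, 2)) altK (@alternating0 F 2).
rewrite trmx0 oppr0 => altG0; have altG1 := alternating_block C altA altE.
have := det_alternating_pencil_eq0 altG0 altG1 s_uniq s_size sing.
have := alternating_tofrac_pencil altG0 altG1.
rewrite !pencil_block map_block_mx => altG detG0.
(* Work over F(X), where K + XA is invertible, then clear the factor X^2. *)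
have uP : map_mx (@tofrac _) (pencil K A) \in unitmx.
  by rewrite unitmxE det_map_mx unitfE tofrac_eq0 det_pencil_neq0.
have := alternating_schur2 altG uP; rewrite -map_block_mx det_map_mx detG0 rmorph0.
move=> /(_ erefl); rewrite -map_mx_adj -!map_mxM det_map_mx [in LHS]mxE [in RHS]mxE.
rewrite -rmorphM => /eqP; rewrite tofrac_eq => /eqP.
set P := pencil K A; set N := _ *m _ *m map_mx polyC C.
have -> : pencil 0 (- C^T) *m \adj P *m pencil 0 C = - ('X ^+ 2 *: N).
  rewrite !pencil0 map_mxN -map_trmx scalerN mulNmx -scalemxAl -scalemxAr.
  by rewrite mulNmx -scalemxAl scalerN scalerA -expr2.
clearbody N; rewrite pencil0 !mxE => eq_entry.
apply: (mulfI (negbT (polyX_eq0 F))).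
by rewrite mulr0 mulrDr mulrCA eq_entry mulrA -expr2 addNr.
Qed.

Lemma pencil_adj_eq0 r p q (K A : 'M[F]_r) (U : 'M[F]_(p, r)) (W : 'M[F]_(r, q)) :
  K \in unitmx -> map_mx polyC U *m \adj (pencil K A) *m map_mx polyC W = 0 ->
  forall k, U *m invmx K *m (A *m invmx K) ^+ k *m W = 0.
Proof.
move=> uK; set P := pencil K A; set Ki := invmx K.
have detK_neq0 : \det K != 0 by rewrite -unitfE -unitmxE.
have PKi : P *m map_mx polyC Ki = 1%:M + 'X *: map_mx polyC (A *m Ki).
  by rewrite mulmxDl -scalemxAl -!map_mxM mulmxV // map_mx1.
have adjP :
    \adj P = \det P *: map_mx polyC Ki - 'X *: (\adj P *m map_mx polyC (A *m Ki)).
  apply/eqP; rewrite eq_sym subr_eq scalemxAr -[X in X + _]mulmx1 -mulmxDr -PKi.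
  by rewrite mulmxA mul_adj_mx mul_scalar_mx.
pose S k :=
  map_mx polyC U *m \adj P *m map_mx polyC ((A *m Ki) ^+ k) *m map_mx polyC W.
pose T k := U *m Ki *m (A *m Ki) ^+ k *m W.
have S_rec k : S k = \det P *: map_mx polyC (T k) - 'X *: S k.+1.
  rewrite /S /T {1}adjP mulmxBr !mulmxBl -!scalemxAr -!scalemxAl exprS -mulmxE.
  by rewrite !map_mxM !mulmxA.
have S_eq0 k : S k = 0 -> T k = 0 /\ S k.+1 = 0.
  move=> Sk0; have := S_rec k; rewrite Sk0 => /esym /eqP; rewrite subr_eq0 => /eqP eq_S.
  have := congr1 (map_mx (horner_eval 0)) eq_S.
  rewrite !map_mxZ map_mx_polyC_eval /= !horner_evalE det_pencil_at0 hornerX scale0r.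
  move=> /eqP; rewrite scalemx_eq0 (negPf detK_neq0) => /eqP Tk0; split=> //.
  move: eq_S; rewrite Tk0 map_mx0 scaler0 => /esym/eqP.
  by rewrite scalemx_eq0 polyX_eq0 => /eqP.
move=> S0_eq0 k; suff : S k = 0 by move=> /S_eq0 [].
elim: k => [|k IHk]; last by have [] := S_eq0 k IHk.
by rewrite /S expr0 map_mx1 mulmx1.
Qed.

End Pencil.

Lemma colsub_congr (R : pzRingType) p n k (g : 'I_k -> 'I_n) (M : 'M[R]_(p, n))
    (Q : 'M[R]_p) :
  (colsub g M)^T *m Q *m colsub g M = mxsub g g (M^T *m Q *m M).
Proof. by rewrite trmx_mxsub mxsub_mul -mul_rowsub_mx. Qed.

Lemma block_congr_colsub (F : fieldType) r m k (g : 'I_k -> 'I_m) (K A : 'M[F]_r)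
    (B : 'M[F]_(r, m)) (D : 'M[F]_m) t :
  let W := block_mx 1%:M 0 0 (colsub g 1%:M) in
  W^T *m (block_mx K 0 0 0 + t *: block_mx A B (- B^T) D) *m W =
  block_mx K 0 0 0 + t *: block_mx A (colsub g B) (- (colsub g B)^T) (mxsub g g D).
Proof.
rewrite /= tr_block_mx trmx1 !trmx0 scale_block_mx add_block_mx !mulmx_block.
rewrite !mul1mx !mul0mx !mulmx0 !mulmx1 !addr0 !add0r scale_block_mx add_block_mx !add0r.
rewrite -!scalemxAr -!scalemxAl colsub_congr trmx1 mul1mx mulmx1 mulmxN.
by rewrite mulmx_colsub mulmx1 -trmx_mul mulmx_colsub mulmx1.
Qed.

Lemma det_rank_lt (F : fieldType) n (X : 'M[F]_n) : (\rank X < n)%N -> \det X = 0.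
Proof.
apply: contraTeq => det_neq0.
by rewrite mxrank_unit ?ltnn // unitmxE unitfE.
Qed.

Lemma pencil_schur_entry_rank (F : fieldType) r m (K A : 'M[F]_r) (B : 'M[F]_(r, m))
    (D : 'M[F]_m) (s : seq F) (i j : 'I_m) :
  alternating K -> alternating A -> alternating D -> K \in unitmx ->
  uniq s -> (r + 2 < (size s).*2)%N ->
  (forall t, t \in s -> \rank (block_mx K 0 0 0 + t *: block_mx A B (- B^T) D)%R <= r)%N ->
  \det (pencil K A) * (D i j)%:P +
    'X * ((map_mx polyC B)^T *m \adj (pencil K A) *m map_mx polyC B) i j = 0.
Proof.
move=> altK altA altD uK s_uniq s_size rank_le.
(* Congruence by W = diag(1, colsub g 1) restricts to the rows and columns
   1..r, i, j without increasing the rank. *)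
pose g (b : 'I_2) := if b == 0 then i else j.
have altE : alternating (mxsub g g D).
  by have := alternating_congr (colsub g 1%:M) altD; rewrite colsub_congr trmx1 mul1mx mulmx1.
have := pencil_schur_entry (C := colsub g B) altK altA altE uK s_uniq s_size.
rewrite map_mxsub colsub_congr !mxE /= => -> // t /rank_le rank_le_t.
apply: det_rank_lt; rewrite -(block_congr_colsub g).
apply: leq_ltn_trans
  (leq_trans (mxrankM_maxl _ _) (leq_trans (mxrankM_maxr _ _) rank_le_t)) _.
by rewrite addn2.
Qed.

Lemma mul_polyC_addX_eq0 (F : fieldType) (d p : {poly F}) (c : F) :
  d.[0] != 0 -> d * c%:P + 'X * p = 0 -> c = 0 /\ p = 0.
Proof.
move=> d0_neq0 eq0; have := congr1 (horner_eval 0) eq0.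
rewrite rmorphD !rmorphM rmorph0 /= !horner_evalE hornerX hornerC mul0r addr0.
move=> /eqP; rewrite mulf_eq0 (negPf d0_neq0) => /eqP c0; split=> //.
by move: eq0 => /eqP; rewrite c0 mulr0 add0r mulf_eq0 polyX_eq0 => /eqP.
Qed.

Theorem corollary9 (F : fieldType) (r m : nat)
  (A K : 'M[F]_r) (B : 'M[F]_(r, m)) (D : 'M[F]_m) :
  (0 < r)%N -> ~~ odd r ->
  card_gt F (r./2).+1 ->
  alternating K -> alternating A -> alternating D ->
  K \in unitmx ->
  (forall t : F,
     (\rank ((block_mx K (0 : 'M[F]_(r, m)) (0 : 'M[F]_(m, r)) (0 : 'M[F]_m) + t *: block_mx A B (- B^T) D)%R) <= r)%N) ->
  D = 0 /\
  (forall k : nat,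
     B^T *m invmx K *m (A *m invmx K) ^+ k *m B = 0).
Proof.
move=> _ r_even [s [s_uniq s_size]] altK altA altD uK rank_le.
have size_s : (r + 2 < (size s).*2)%N.
  by rewrite s_size -{1}(odd_double_half r) (negPf r_even) !doubleS add0n addn2 !ltnS.
have entry i j :=
  pencil_schur_entry_rank i j altK altA altD uK s_uniq size_s (fun t _ => rank_le t).
have detP0 : (\det (pencil K A)).[0] != 0 by rewrite det_pencil_at0 -unitfE -unitmxE.
split.
  by apply/matrixP => i j; have [-> _] := mul_polyC_addX_eq0 detP0 (entry i j); rewrite mxE.
apply: pencil_adj_eq0 uK _; rewrite -map_trmx.
by apply/matrixP => i j; have [_ ->] := mul_polyC_addX_eq0 detP0 (entry i j); rewrite mxE.
Qed.
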